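(* Let $A$ be a non-zero $n\times m$ matrix with entries in $[0,1]$, let $v$ be the value of the zero-sum game $A$, and let $x^*\in\Delta_n$ be any minimax strategy of the row player (i.e. $f(x^* )=v$). Suppose the row player plays the multiplicative weight update (MWU) algorithm with a non-increasing step size sequence $(\mu_t)$ for which there exists $t'\in\mathbb{N}$ with $\mu_{t'}\le 1$, and the column player plays the LRCA algorithm. Then $$RE(x^*\|x_{2k-1})-RE(x^*\|x_{2k+1})\ \ge\ \tfrac12\,\mu_{2k}\,\alpha_{2k}\,\big(f(x_{2k-1})-v\big)\qquad\text{for all }k\in\mathbb{N}\text{ with }2k\ge t',$$ where $\alpha_{2k}$ is the mixing coefficient used by LRCA at round $2k$.
   Context: Repeated two-player zero-sum game: $A$ is an $n\times m$ non-zero matrix with entries in $[0,1]$; $\Delta_n,\Delta_m$ are the probability simplices. At round $t=1,2,\dots$ the row player plays $x_t\in\Delta_n$, the column player plays $y_t\in\Delta_m$; the row player wants to minimize $x_t^\top Ay_t$, the column player to maximize it. $v=\max_{y}\min_x x^\top Ay=\min_x\max_y x^\top Ay$ is the value of the game and $f(x):=\max_{y\in\Delta_m}x^\top Ay$. A minimax strategy of the row player is $x$ with $f(x)=v$; a minimax strategy of the column player is $y$ with $\min_{x\in\Delta_n}x^\top Ay=v$. Relative entropy: $RE(X_1\|X_2)=\sum_{i=1}^n X_1(i)\log\frac{X_1(i)}{X_2(i)}$. MWU for the row player: starting from an initial $x_1$ with all entries positive, $x_{t+1}(i)=x_t(i)e^{-\mu_t e_i^\top Ay_t}/Z_t$ with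 $Z_t=\sum_{j}x_t(j)e^{-\mu_t e_j^\top Ay_t}$, $\mu_t\ge 0$, $e_i$ the $i$-th unit vector. LRCA algorithm for the column player (who knows $A$, and fixes one minimax strategy $y^*$ of the column player): at odd rounds $t$, $y_t=y^*$; at even rounds $t$, let $e_t\in\arg\max_{e\in\{e_1,\dots,e_m\}}x_{t-1}^\top Ae$ (unit vectors in $\mathbb{R}^m$), $\alpha_t=\frac{f(x_{t-1})-v}{\max(n/4,\,2)}$, and $y_t=(1-\alpha_t)y^*+\alpha_t e_t$. *)

From HB Require Import structures.
From mathcomp Require Import all_boot all_order all_algebra.
From mathcomp Require Import all_classical all_reals all_analysis.
Set Implicit Arguments. Unset Strict Implicit. Unset Printing Implicit Defensive.
Import Order.TTheory GRing.Theory Num.Theory.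
Local Open Scope classical_set_scope.
Local Open Scope ring_scope.

Section GameDefs.
Context {R : realType}.

Definition simplex (k : nat) : set ('I_k -> R) :=
  [set x | (forall i, 0 <= x i) /\ \sum_(i < k) x i = 1].
Arguments simplex : clear implicits.

Definition payoff (n m : nat) (A : 'M[R]_(n, m)) (x : 'I_n -> R) (y : 'I_m -> R) : R :=
  \sum_(i < n) \sum_(j < m) x i * A i j * y j.

Definition fmax (n m : nat) (A : 'M[R]_(n, m)) (x : 'I_n -> R) : R :=
  sup [set payoff A x y | y in simplex m].

Definition gmin (n m : nat) (A : 'M[R]_(n, m)) (y : 'I_m -> R) : R :=
  inf [set payoff A x y | x in simplex n].

Definition game_value (n m : nat) (A : 'M[R]_(n, m)) : R :=
  inf [set fmax A x | x in simplex n].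

Definition row_minimax (n m : nat) (A : 'M[R]_(n, m)) (x : 'I_n -> R) : Prop :=
  simplex n x /\ fmax A x = game_value A.

Definition col_minimax (n m : nat) (A : 'M[R]_(n, m)) (y : 'I_m -> R) : Prop :=
  simplex m y /\ gmin A y = game_value A.

(* relative entropy; since ln 0 = 0 in mathcomp-analysis, terms with
   X1 i = 0 contribute 0 (convention 0 log 0 = 0) *)
Definition RE (n : nat) (X1 X2 : 'I_n -> R) : R :=
  \sum_(i < n) X1 i * ln (X1 i / X2 i).

Definition unitv (m : nat) (j : 'I_m) : 'I_m -> R :=
  fun j' => if j' == j then 1 else 0.

Definition lrca_alpha (n m : nat) (A : 'M[R]_(n, m)) (xprev : 'I_n -> R) : R :=
  (fmax A xprev - game_value A) / Num.max (n%:R / 4) 2.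

Definition MWU (n m : nat) (A : 'M[R]_(n, m)) (mu : nat -> R)
    (x : nat -> 'I_n -> R) (y : nat -> 'I_m -> R) : Prop :=
  simplex n (x 1%N) /\ (forall i, 0 < x 1%N i) /\
  forall t, (1 <= t)%N -> forall i,
    x t.+1 i = x t i * expR (- mu t * (\sum_(j < m) A i j * y t j)) /
               (\sum_(i' < n) x t i' * expR (- mu t * (\sum_(j < m) A i' j * y t j))).

Definition LRCA (n m : nat) (A : 'M[R]_(n, m)) (ystar : 'I_m -> R)
    (x : nat -> 'I_n -> R) (y : nat -> 'I_m -> R) : Prop :=
  forall t, (1 <= t)%N ->
    (odd t -> y t = ystar) /\
    (~~ odd t -> exists j : 'I_m,
        (forall j' : 'I_m, payoff A (x t.-1) (unitv j') <= payoff A (x t.-1) (unitv j)) /\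
        y t = (fun j' => (1 - lrca_alpha A (x t.-1)) * ystar j'
                          + lrca_alpha A (x t.-1) * unitv j j')).

End GameDefs.

(* Over the rounds 2k-1 and 2k the row player's weights are multiplied by
   exp(g) with g = -mu_{2k-1} A y* - mu_{2k} A y_{2k}, and RE(x* || .) drops by
   <x*, g> - ln (sum_i x_i exp(g_i)).  Every row loses at least v against the
   minimax y*, and x* loses at most v against anything, so <x*, g> is at least
   -(mu_{2k-1} + mu_{2k}) v.  With beta = mu_{2k} alpha and e the best response
   to x = x_{2k-1}, g_i <= -(mu_{2k-1} + mu_{2k}) v + beta (v - A_{ie}); the
   bound exp w <= 1 + w + w^2 on |w| <= 1/2 and ln (1 + u) <= u then give
   ln (sum_i x_i exp(g_i)) <= -(mu_{2k-1} + mu_{2k}) v + beta (v - f(x)) + beta^2.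
   So the drop is at least beta (f(x) - v) - beta^2, and beta <= alpha <= (f(x) - v)/2
   because mu_{2k} <= 1 and the LRCA denominator is at least 2. *)

From HB Require Import structures.
From mathcomp Require Import all_boot all_order all_algebra.
From mathcomp Require Import all_classical all_reals all_analysis.
From mathcomp Require Import ring lra.
Import Order.TTheory GRing.Theory Num.Theory.
Local Open Scope ring_scope.

Section ExpBounds.
Context {R : realType}.

Lemma expR_le_inv1B (w : R) : w < 1 -> expR w <= (1 - w)^-1.
Proof.
move=> w1; have := expR_ge1Dx (- w); rewrite expRN => hNw.
by rewrite -[expR w]invrK lef_pV2 ?posrE ?invr_gt0 ?expR_gt0 ?subr_gt0.
Qed.

(* [expR w = expR (w / 4) ^+ 4 <= (1 - w / 4) ^- 4], and
   [(1 + w + w ^+ 2) * (1 - w / 4) ^+ 4 >= 1] when [|w| <= 1 / 2]. *)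
Lemma expR_le1Dx_sqr (w : R) : `|w| <= 1 / 2 -> expR w <= 1 + w + w ^+ 2.
Proof.
move=> /ler_normlP[wl wu].
pose u := w / 4.
have [ul uu] : - (1 / 8) <= u /\ u <= 1 / 8 by rewrite /u; split; lra.
have u0 : 0 < 1 - u by lra.
have -> : w = 4%:R * u by rewrite /u; field.
rewrite expRM_natl.
have u1 : u < 1 by lra.
apply: le_trans (lerXn2r 4 _ _ (expR_le_inv1B _ u1)) _.
- by rewrite nnegrE expR_ge0.
- by rewrite nnegrE invr_ge0 ltW.
rewrite exprVn -[X in X <= _]mul1r ler_pdivrMr ?exprn_gt0 //.
have poly_ge0 : 0 <= 6%:R - 44%:R * u + 81%:R * u ^+ 2 - 60%:R * u ^+ 3 + 16%:R * u ^+ 4.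
  have u3 : u ^+ 3 <= 1 / 8 * u ^+ 2.
    by rewrite exprS ler_wpM2r ?sqr_ge0.
  have u4 : 0 <= u ^+ 4 by rewrite (exprM u 2 2) sqr_ge0.
  have := sqr_ge0 u; lra.
have : (1 + 4%:R * u + (4%:R * u) ^+ 2) * (1 - u) ^+ 4 - 1 =
  u ^+ 2 * (6%:R - 44%:R * u + 81%:R * u ^+ 2 - 60%:R * u ^+ 3 + 16%:R * u ^+ 4).
  by rewrite !exprS expr0; ring.
have := mulr_ge0 (sqr_ge0 u) poly_ge0; lra.
Qed.

End ExpBounds.

Section MultiplicativeUpdate.
Context {R : realType} {k : nat}.
Implicit Types (x xs d l : 'I_k -> R).

Lemma simplex_sum_expR_gt0 {x} l : simplex x -> 0 < \sum_(i < k) x i * expR (l i).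
Proof.
move=> [x0 x1].
have xe_ge0 i : 0 <= x i * expR (l i) by rewrite mulr_ge0 ?expR_ge0.
rewrite lt_def sumr_ge0 // andbT; apply/eqP => /(psumr_eq0P (fun i _ => xe_ge0 i)) xe0.
have x_eq0 i : x i = 0.
  by have /eqP := xe0 i isT; rewrite mulf_eq0 expR_eq0 orbF => /eqP.
by move: x1; rewrite big1 // => /esym/eqP; rewrite oner_eq0.
Qed.

Definition mw_update x l : 'I_k -> R :=
  fun i => x i * expR (l i) / \sum_(j < k) x j * expR (l j).

Lemma mw_update_simplex x l : simplex x -> simplex (mw_update x l).
Proof.
move=> sx; have Z0 := simplex_sum_expR_gt0 l sx; case: sx => x0 _; split.
  by move=> i; rewrite /mw_update divr_ge0 ?mulr_ge0 ?expR_ge0 // ltW.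
by rewrite /mw_update -mulr_suml divff // gt_eqF.
Qed.

Lemma mw_update_gt0 {x} l :
  simplex x -> (forall i, 0 < x i) -> forall i, 0 < mw_update x l i.
Proof.
move=> sx x0 i.
by rewrite divr_gt0 ?mulr_gt0 ?expR_gt0 ?simplex_sum_expR_gt0.
Qed.

Lemma mw_updateD x l1 l2 :
  simplex x -> mw_update (mw_update x l1) l2 = mw_update x (l1 \+ l2).
Proof.
move=> sx; have Z1_gt0 := simplex_sum_expR_gt0 l1 sx.
have Z_gt0 := simplex_sum_expR_gt0 (l1 \+ l2) sx.
apply/funext => i; rewrite /mw_update.
set Z1 := \sum_(j < k) x j * expR (l1 j) in Z1_gt0 *.
set Z := \sum_(j < k) x j * expR ((l1 \+ l2) j) in Z_gt0 *.
have -> : \sum_(j < k) x j * expR (l1 j) / Z1 * expR (l2 j) = Z / Z1.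
  rewrite /Z mulr_suml; apply: eq_bigr => j _; rewrite /= expRD.
  by field; rewrite gt_eqF.
by rewrite /= expRD; field; rewrite !gt_eqF.
Qed.

Lemma RE_mw_update xs x l : simplex xs -> simplex x -> (forall i, 0 < x i) ->
  RE xs x - RE xs (mw_update x l) =
  \sum_(i < k) xs i * l i - ln (\sum_(i < k) x i * expR (l i)).
Proof.
move=> [xs0 xs1] sx x_gt0; have Z_gt0 := simplex_sum_expR_gt0 l sx.
rewrite /RE -sumrB -[ln _]mul1r -xs1 mulr_suml -sumrB; apply: eq_bigr => i _.
have [->|xsi_neq0] := eqVneq (xs i) 0; first by rewrite !mul0r subrr.
have xsi_gt0 : 0 < xs i by rewrite lt0r xsi_neq0 xs0.
rewrite /mw_update !ln_div ?lnM ?expRK ?posrE ?divr_gt0 ?mulr_gt0 ?expR_gt0 //.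
ring.
Qed.

Lemma ln_sum_expR_le {x g c d b} :
  simplex x -> (forall i, `|d i| <= 1) -> 0 <= b <= 1 / 2 ->
  (forall i, g i <= c + b * d i) ->
  ln (\sum_(i < k) x i * expR (g i)) <= c + (b * \sum_(i < k) x i * d i + b ^+ 2).
Proof.
move=> sx d1 /andP[b0 b_half] g_le; have [x0 x1] := sx.
have mean_d : `|\sum_(i < k) x i * d i| <= 1.
  rewrite -x1; apply: le_trans (ler_norm_sum _ _ _) _; apply: ler_sum => i _.
  by rewrite normrM ger0_norm // ler_piMr.
have quad_le : \sum_(i < k) x i * expR (g i) <=
               expR c * (1 + (b * \sum_(i < k) x i * d i + b ^+ 2)).
  have -> : 1 + (b * \sum_(i < k) x i * d i + b ^+ 2) =
            \sum_(i < k) x i * (1 + b * d i + b ^+ 2).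
    rewrite [RHS](eq_bigr (fun i => x i * (1 + b ^+ 2) + b * (x i * d i))) => [|i _].
      by rewrite big_split /= -mulr_suml -mulr_sumr x1; ring.
    by rewrite /=; ring.
  rewrite mulr_sumr; apply: ler_sum => i _; rewrite mulrCA; apply: ler_wpM2l => //.
  apply: le_trans (_ : expR c * expR (b * d i) <= _); first by rewrite -expRD ler_expR.
  rewrite ler_wpM2l ?expR_ge0 //.
  have bd : `|b * d i| <= b by rewrite normrM ger0_norm // ler_piMr.
  apply: le_trans (expR_le1Dx_sqr _ (le_trans bd b_half)) _.
  by rewrite lerD2l exprMn ler_piMr ?sqr_ge0 // -real_normK ?num_real // expr_le1.
have mean_gt : -1 < b * \sum_(i < k) x i * d i + b ^+ 2 by case/ler_normlP: mean_d; nra.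
have one_add_gt0 : 0 < 1 + (b * \sum_(i < k) x i * d i + b ^+ 2) by lra.
apply: le_trans (_ : ln (expR c * (1 + (b * \sum_(i < k) x i * d i + b ^+ 2))) <= _).
  by rewrite ler_ln ?posrE ?mulr_gt0 ?expR_gt0 ?simplex_sum_expR_gt0.
by rewrite lnM ?posrE ?expR_gt0 // expRK lerD2l le_ln1Dx.
Qed.

End MultiplicativeUpdate.

Section UnitVectors.
Context {R : realType} {k : nat}.

Lemma sum_unitv_mul (i0 : 'I_k) (F : 'I_k -> R) : \sum_(i < k) unitv i0 i * F i = F i0.
Proof.
rewrite (bigD1 i0) //= big1 => [|i /negPf i_neq]; last by rewrite /unitv i_neq mul0r.
by rewrite addr0 /unitv eqxx mul1r.
Qed.

Lemma simplex_unitv (i0 : 'I_k) : simplex (unitv i0 : 'I_k -> R).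
Proof.
split=> [i|]; first by rewrite /unitv; case: ifP.
by rewrite -[RHS](sum_unitv_mul i0 (fun _ => 1)); apply: eq_bigr => i _; rewrite mulr1.
Qed.

Definition mix (y z : 'I_k -> R) (a : R) : 'I_k -> R := fun i => (1 - a) * y i + a * z i.

Lemma simplex_mix y z a : simplex y -> simplex z -> 0 <= a <= 1 -> simplex (mix y z a).
Proof.
move=> [y0 y1] [z0 z1] /andP[a0 a1]; split=> [i|].
  by rewrite addr_ge0 ?mulr_ge0 ?subr_ge0.
by rewrite big_split /= -!mulr_sumr y1 z1; ring.
Qed.

End UnitVectors.

Section Game.
Context {R : realType} {n m : nat} (A : 'M[R]_(n, m)).
Hypothesis A01 : forall i j, 0 <= A i j <= 1.

Definition row_payoff (y : 'I_m -> R) (i : 'I_n) : R := \sum_(j < m) A i j * y j.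

Lemma payoff_row_payoff x y : payoff A x y = \sum_(i < n) x i * row_payoff y i.
Proof.
by apply: eq_bigr => i _; rewrite mulr_sumr; apply: eq_bigr => j _; rewrite mulrA.
Qed.

Lemma row_payoff_unitv j i : row_payoff (unitv j) i = A i j.
Proof.
by rewrite /row_payoff; under eq_bigr => j' _ do rewrite mulrC; rewrite sum_unitv_mul.
Qed.

Lemma row_payoff_mix y z a i :
  row_payoff (mix y z a) i = (1 - a) * row_payoff y i + a * row_payoff z i.
Proof.
rewrite /row_payoff !mulr_sumr -big_split; apply: eq_bigr => j _ /=.
by rewrite /mix; ring.
Qed.

Lemma payoff_pure_cols x y : payoff A x y = \sum_(j < m) y j * payoff A x (unitv j).
Proof.
rewrite [RHS](eq_bigr (fun j => \sum_(i < n) y j * (x i * A i j))) => [|j _]; last first.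
  by rewrite payoff_row_payoff mulr_sumr; apply: eq_bigr => i _; rewrite row_payoff_unitv.
rewrite payoff_row_payoff exchange_big; apply: eq_bigr => i _.
by rewrite /row_payoff mulr_sumr; apply: eq_bigr => j _ /=; ring.
Qed.

Lemma payoff_ge0_le1 {x y} : simplex x -> simplex y -> 0 <= payoff A x y <= 1.
Proof.
move=> [x0 x1] [y0 y1]; rewrite payoff_row_payoff.
have row_ge0_le1 i : 0 <= row_payoff y i <= 1.
  rewrite sumr_ge0 => [|j _]; last by rewrite mulr_ge0 //; case/andP: (A01 i j).
  rewrite -y1; apply: ler_sum => j _; rewrite ler_piMl //; by case/andP: (A01 i j).
rewrite sumr_ge0 => [|i _]; last by rewrite mulr_ge0 //; case/andP: (row_ge0_le1 i).
rewrite -x1; apply: ler_sum => i _; rewrite ler_piMr //; by case/andP: (row_ge0_le1 i).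
Qed.

Lemma payoff_le_fmax {x y} : simplex x -> simplex y -> payoff A x y <= fmax A x.
Proof.
move=> sx sy; apply: ub_le_sup; last by exists y.
by exists 1 => _ [y' sy' <-]; case/andP: (payoff_ge0_le1 sx sy').
Qed.

Lemma fmax_le_pure {x c} :
  (0 < m)%N -> (forall j, payoff A x (unitv j) <= c) -> fmax A x <= c.
Proof.
move=> m_gt0 pure_le; apply: ge_sup.
  exists (payoff A x (unitv (Ordinal m_gt0))), (unitv (Ordinal m_gt0)) => //.
  exact: simplex_unitv.
move=> _ [y [y0 y1] <-]; rewrite payoff_pure_cols -[c]mul1r -y1 mulr_suml.
by apply: ler_sum => j _; rewrite ler_wpM2l.
Qed.

Lemma fmax_le_best_response {x j} :
  (forall j', payoff A x (unitv j') <= payoff A x (unitv j)) ->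
  fmax A x <= \sum_(i < n) x i * A i j.
Proof.
move=> j_best; have m_gt0 : (0 < m)%N := leq_ltn_trans (leq0n j) (ltn_ord j).
apply: le_trans (fmax_le_pure m_gt0 j_best) _.
by rewrite payoff_row_payoff; under eq_bigr => i _ do rewrite row_payoff_unitv.
Qed.

Lemma fmax_ge0_le1 {x} : (0 < m)%N -> simplex x -> 0 <= fmax A x <= 1.
Proof.
move=> m_gt0 sx; have su : simplex (unitv (Ordinal m_gt0) : _ -> R) := simplex_unitv _.
have /andP[pay0 _] := payoff_ge0_le1 sx su.
rewrite (le_trans pay0 (payoff_le_fmax sx su)) fmax_le_pure // => j.
by case/andP: (payoff_ge0_le1 sx (simplex_unitv j)).
Qed.

Lemma game_value_le_fmax {x} : (0 < m)%N -> simplex x -> game_value A <= fmax A x.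
Proof.
move=> m_gt0 sx; apply: ge_inf; last by exists x.
by exists 0 => _ [x' sx' <-]; case/andP: (fmax_ge0_le1 m_gt0 sx').
Qed.

Lemma game_value_ge0 {x : 'I_n -> R} : (0 < m)%N -> simplex x -> 0 <= game_value A.
Proof.
move=> m_gt0 sx; apply: lb_le_inf; first by exists (fmax A x), x.
by move=> _ [x' sx' <-]; case/andP: (fmax_ge0_le1 m_gt0 sx').
Qed.

Lemma payoff_le_game_value {xs y} : row_minimax A xs -> simplex y ->
  payoff A xs y <= game_value A.
Proof. by move=> [sxs <-]; apply: payoff_le_fmax. Qed.

Lemma game_value_le_row_payoff {ys} i : col_minimax A ys ->
  game_value A <= row_payoff ys i.
Proof.
move=> [sys <-]; have <- : payoff A (unitv i) ys = row_payoff ys i.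
  by rewrite payoff_row_payoff sum_unitv_mul.
apply: ge_inf; last by exists (unitv i); first exact: simplex_unitv.
by exists 0 => _ [x' sx' <-]; case/andP: (payoff_ge0_le1 sx' sys).
Qed.

Lemma lrca_alpha_bounds {x} : (0 < m)%N -> simplex x ->
  0 <= lrca_alpha A x /\ lrca_alpha A x * 2 <= fmax A x - game_value A.
Proof.
move=> m_gt0 sx; have gap_ge0 : 0 <= fmax A x - game_value A.
  by rewrite subr_ge0 game_value_le_fmax.
have max_ge2 : 2 <= Num.max (n%:R / 4 : R) 2 by rewrite le_max lexx orbT.
rewrite /lrca_alpha divr_ge0 ?(le_trans _ max_ge2) //; split=> //.
by rewrite -mulrA ler_piMr // mulrC ler_pdivrMr ?mul1r // (lt_le_trans _ max_ge2).
Qed.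

End Game.

Section MWUDynamics.
Context {R : realType} {n m : nat} (A : 'M[R]_(n, m)).

Definition mwu_exponent (mu : R) (y : 'I_m -> R) : 'I_n -> R :=
  fun i => - mu * row_payoff A y i.

Lemma MWU_update {mu x y t} : MWU A mu x y -> (1 <= t)%N ->
  x t.+1 = mw_update (x t) (mwu_exponent (mu t) (y t)).
Proof. by move=> [_ [_ step]] t_ge1; apply/funext => i; rewrite step. Qed.

Lemma MWU_simplex_gt0 {mu x y t} : MWU A mu x y -> (1 <= t)%N ->
  simplex (x t) /\ forall i, 0 < x t i.
Proof.
move=> mwu; elim: t => [//|[|t] IH] _; first by case: mwu => ? [].
have [sx x_gt0] := IH isT.
by rewrite (MWU_update mwu) //; split; [exact: mw_update_simplex | exact: mw_update_gt0].
Qed.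

End MWUDynamics.

Section LRCAPair.
Context {R : realType} {n m : nat} (A : 'M[R]_(n, m)).
Hypothesis A01 : forall i j, 0 <= A i j <= 1.
Context {xs : 'I_n -> R} {ys : 'I_m -> R}.
Hypotheses (xs_minimax : row_minimax A xs) (ys_minimax : col_minimax A ys).

Lemma minimax_exponent_ge mu y : simplex y -> 0 <= mu ->
  - mu * game_value A <= \sum_(i < n) xs i * mwu_exponent A mu y i.
Proof.
move=> sy mu_ge0; have := payoff_le_game_value A A01 xs_minimax sy.
rewrite payoff_row_payoff.
have -> : \sum_(i < n) xs i * mwu_exponent A mu y i =
          - mu * \sum_(i < n) xs i * row_payoff A y i.
  by rewrite mulr_sumr; apply: eq_bigr => i _; rewrite /mwu_exponent; ring.
nra.
Qed.

(* Since [ys] is minimax, every row loses at least [game_value A] against it. *)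
Lemma lrca_exponent_le mu1 mu2 al j i : 0 <= mu1 -> 0 <= mu2 -> al <= 1 ->
  (mwu_exponent A mu1 ys \+ mwu_exponent A mu2 (mix ys (unitv j) al)) i <=
  - (mu1 + mu2) * game_value A + mu2 * al * (game_value A - A i j).
Proof.
move=> mu1_ge0 mu2_ge0 al_le1.
rewrite /= /mwu_exponent row_payoff_mix row_payoff_unitv.
have := game_value_le_row_payoff A A01 i ys_minimax.
have : 0 <= mu1 + mu2 * (1 - al) by rewrite addr_ge0 // mulr_ge0 // subr_ge0.
nra.
Qed.

Lemma lrca_pair_RE_decrease {mu1 mu2 x j} :
  simplex x -> (forall i, 0 < x i) ->
  (forall j', payoff A x (unitv j') <= payoff A x (unitv j)) ->
  0 <= mu1 -> 0 <= mu2 <= 1 ->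
  1 / 2 * mu2 * lrca_alpha A x * (fmax A x - game_value A) <=
  RE xs x - RE xs (mw_update x (mwu_exponent A mu1 ys \+
                                mwu_exponent A mu2 (mix ys (unitv j) (lrca_alpha A x)))).
Proof.
move=> sx x_gt0 j_best mu1_ge0 /andP[mu2_ge0 mu2_le1].
have m_gt0 : (0 < m)%N := leq_ltn_trans (leq0n j) (ltn_ord j).
have [al_ge0 al2_le] := lrca_alpha_bounds A A01 m_gt0 sx.
have v_ge0 := game_value_ge0 A A01 m_gt0 sx.
have v_le_f := game_value_le_fmax A A01 m_gt0 sx.
have /andP[_ f_le1] := fmax_ge0_le1 A A01 m_gt0 sx.
have f_le := fmax_le_best_response A j_best.
set v := game_value A in v_ge0 v_le_f al2_le *.
set f := fmax A x in v_le_f f_le1 f_le al2_le *.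
set al := lrca_alpha A x in al_ge0 al2_le *; set b := mu2 * al.
set g := _ \+ _.
have sys := ys_minimax.1.
have smix : simplex (mix ys (unitv j) al).
  by apply: simplex_mix => //; [exact: simplex_unitv | lra].
have g_mean_ge : - (mu1 + mu2) * v <= \sum_(i < n) xs i * g i.
  under eq_bigr => i _ do rewrite /g /= mulrDr.
  by rewrite big_split /= opprD mulrDl; apply: lerD; apply: minimax_exponent_ge.
have d_le1 i : `|v - A i j| <= 1 by have := A01 i j; rewrite ler_norml; lra.
have b_range : 0 <= b <= 1 / 2 by rewrite /b; apply/andP; split; nra.
have g_le i : g i <= - (mu1 + mu2) * v + b * (v - A i j).
  by apply: lrca_exponent_le => //; lra.
have lnZ_le := ln_sum_expR_le sx d_le1 b_range g_le.
have mean_d : \sum_(i < n) x i * (v - A i j) <= v - f.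
  have [_ x1] := sx; under eq_bigr => i _ do rewrite mulrBr.
  by rewrite sumrB -mulr_suml x1 mul1r; lra.
rewrite RE_mw_update //; last exact: xs_minimax.1.
have [b_ge0 _] := andP b_range.
have b_le_al : b <= al by rewrite /b ler_piMl.
(* [b ^+ 2 <= b * al <= b * (f - v) / 2] *)
have : 0 <= b * (al - b) by rewrite mulr_ge0 ?subr_ge0.
have : 0 <= b * (f - v - al * 2) by rewrite mulr_ge0 ?subr_ge0.
have : 0 <= b * (v - f - \sum_(i < n) x i * (v - A i j)) by rewrite mulr_ge0 ?subr_ge0.
have -> : 1 / 2 * mu2 * al * (f - v) = 1 / 2 * b * (f - v) by rewrite /b; ring.
rewrite expr2 in lnZ_le; lra.
Qed.

End LRCAPair.

Theorem lemma4 (R : realType) (n m : nat) (A : 'M[R]_(n, m))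
  (hA0 : A != 0)
  (hA01 : forall i j, 0 <= A i j <= 1)
  (xstar : 'I_n -> R) (hxstar : row_minimax A xstar)
  (ystar : 'I_m -> R) (hystar : col_minimax A ystar)
  (mu : nat -> R)
  (hmu0 : forall t, (1 <= t)%N -> 0 <= mu t)
  (hmudec : forall s t, (1 <= s)%N -> (s <= t)%N -> mu t <= mu s)
  (t' : nat) (ht'1 : (1 <= t')%N) (ht' : mu t' <= 1)
  (x : nat -> 'I_n -> R) (y : nat -> 'I_m -> R)
  (hMWU : MWU A mu x y) (hLRCA : LRCA A ystar x y) :
  forall k : nat, (1 <= k)%N -> (t' <= k.*2)%N ->
    RE xstar (x k.*2.-1) - RE xstar (x k.*2.+1)
      >= 1 / 2 * mu k.*2 * lrca_alpha A (x k.*2.-1) * (fmax A (x k.*2.-1) - game_value A).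
Proof.
move=> k k_ge1 t'_le; set t := k.*2.-1.
have k2_ge1 : (1 <= k.*2)%N by rewrite double_gt0.
have t_succ : t.+1 = k.*2 by rewrite prednK.
have t_ge1 : (1 <= t)%N by rewrite -ltnS t_succ -addnn; exact: (leq_add k_ge1 k_ge1).
have t_odd : odd t by have := odd_double k; rewrite -t_succ oddS => /negbFE.
have y_t : y t = ystar := (hLRCA t t_ge1).1 t_odd.
have [j [j_best y_k2]] := (hLRCA k.*2 k2_ge1).2 (negbT (odd_double k)).
have [sx x_gt0] := MWU_simplex_gt0 A hMWU t_ge1.
have -> : x k.*2.+1 = mw_update (x t) (mwu_exponent A (mu t) ystar \+
            mwu_exponent A (mu k.*2) (mix ystar (unitv j) (lrca_alpha A (x t)))).
  rewrite (MWU_update A hMWU) // -t_succ (MWU_update A hMWU) // mw_updateD //.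
  by rewrite y_t t_succ y_k2.
apply: (lrca_pair_RE_decrease A hA01 hxstar hystar sx x_gt0 j_best); first exact: hmu0.
by rewrite hmu0 //= (le_trans (hmudec _ _ ht'1 t'_le)).
Qed.
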